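(* Consider the delay differential system \[ \begin{aligned} \dot T(t)&= s-dT(t)+aT(t)\Big(1-\frac{T(t)+I(t)}{T_{\max}}\Big)-\frac{bT(t)V(t)}{1+\alpha V(t)},\\ \dot I(t)&= \frac{bT(t-\tau)V(t-\tau)}{1+\alpha V(t-\tau)}+aI(t)\Big(1-\frac{T(t)+I(t)}{T_{\max}}\Big)-\mu I(t),\\ \dot V(t)&= pI(t)-cV(t), \end{aligned} \] with positive constants $s,d,a,T_{\max},b,\alpha,\mu,p,c$ and $\tau\ge0$. Let \[ T_0=\frac{T_{\max}}{2a}\Big(a-d+\sqrt{(a-d)^2+\tfrac{4as}{T_{\max}}}\Big),\qquad R_0=\frac{1}{\mu}\Big[\frac{bpT_0}{c}+a\Big(1-\frac{T_0}{T_{\max}}\Big)\Big], \] and let $E_1=(T_0,0,0)$ be the infection-free equilibrium. If $R_0>1$, then the characteristic equation of the linearization at $E_1$ has a positive real root, so $E_1$ is unstable; if $R_0<1$, then $E_1$ is locally asymptotically stable for every $\tau\ge0$.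
   Context: $E_1$ is a constant solution of the system. Local stability refers to the linearization of the delay system at the equilibrium. *)

From HB Require Import structures.
From mathcomp Require Import all_boot all_order all_algebra.
From mathcomp Require Import all_classical all_reals all_analysis.
From mathcomp Require Import complex.
Set Implicit Arguments. Unset Strict Implicit. Unset Printing Implicit Defensive.
Import Order.TTheory GRing.Theory Num.Theory.
Local Open Scope ring_scope.

Section Model.
Variable R : realType.
Variables (s d a Tmax b alpha mu p c : R).

Definition cT (x : 'cV[R]_3) : R := x (inord 0) 0.
Definition cI (x : 'cV[R]_3) : R := x (inord 1) 0.
Definition cV (x : 'cV[R]_3) : R := x (inord 2) 0.

Definition mkst (T I V : R) : 'cV[R]_3 := \col_(i < 3) [:: T; I; V]`_i.

(* right-hand side of the delay system: x = state at time t, xd = state at time t - tau *)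
Definition rhsT (x xd : 'cV[R]_3) : R :=
  s - d * cT x + a * cT x * (1 - (cT x + cI x) / Tmax)
  - b * cT x * cV x / (1 + alpha * cV x).
Definition rhsI (x xd : 'cV[R]_3) : R :=
  b * cT xd * cV xd / (1 + alpha * cV xd)
  + a * cI x * (1 - (cT x + cI x) / Tmax) - mu * cI x.
Definition rhsV (x xd : 'cV[R]_3) : R := p * cI x - c * cV x.

Definition rhs (x xd : 'cV[R]_3) : 'cV[R]_3 := mkst (rhsT x xd) (rhsI x xd) (rhsV x xd).

Definition T0 : R :=
  Tmax / (2 * a) * (a - d + Num.sqrt ((a - d) ^+ 2 + 4 * a * s / Tmax)).

Definition R0 : R := mu^-1 * (b * p * T0 / c + a * (1 - T0 / Tmax)).

Definition E1 : 'cV[R]_3 := mkst T0 0 0.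

Definition jac0 : 'M[R]_3 :=
  \matrix_(i < 3, j < 3) derive1 (fun h : R => rhs (E1 + h *: delta_mx j 0) E1 i 0) 0.
Definition jac1 : 'M[R]_3 :=
  \matrix_(i < 3, j < 3) derive1 (fun h : R => rhs E1 (E1 + h *: delta_mx j 0) i 0) 0.

End Model.

Local Open Scope complex_scope.
Definition cexp (R : realType) (z : R[i]) : R[i] :=
  (expR (complex.Re z) * cos (complex.Im z)) +i* (expR (complex.Re z) * sin (complex.Im z)).

(* characteristic function of the linearization x'(t) = A0 x(t) + A1 x(t - tau):
   Delta(lambda) = det(lambda I - A0 - e^{-lambda tau} A1) *)
Definition charfun (R : realType) (s d a Tmax b alpha mu p c tau : R) (lam : R[i]) : R[i] :=
  \det (lam%:M - map_mx (fun r : R => r%:C) (jac0 s d a Tmax b alpha mu p c)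
        - cexp (- (lam * tau%:C)) *: map_mx (fun r : R => r%:C) (jac1 s d a Tmax b alpha mu p c)).

From Pilot Require Import Defs.
From HB Require Import structures.
From mathcomp Require Import all_boot all_order all_algebra ring lra.
From mathcomp Require Import all_classical all_reals all_analysis.
From mathcomp Require Import complex.
Set Implicit Arguments. Unset Strict Implicit. Unset Printing Implicit Defensive.
Import Order.TTheory GRing.Theory Num.Theory numFieldNormedType.Exports.
Local Open Scope ring_scope.

(* At E1 the (I, V)-block of the linearization decouples from T, so the
   characteristic function factors as (lam - J_TT) * g(lam) with
   g(lam) = (lam - k)(lam + c) - e^(-lam tau) b p T0, k = a (1 - T0/Tmax) - mu,
   and J_TT = -sqrt((a - d)^2 + 4 a s / Tmax) < 0.  Since R0 - 1 has the sign of
   b p T0 / c + k: if R0 > 1 then g(0) < 0 < g(+oo) gives a positive real root;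
   if R0 < 1 and Re lam >= 0 then
   |lam - k| |lam + c| >= (Re lam - k)(Re lam + c) > b p T0 >= |e^(-lam tau)| b p T0,
   so g(lam) <> 0. *)

Lemma det_mx33 (K : comNzRingType) (M : 'M[K]_3) :
  let m (i j : nat) := M (inord i) (inord j) in
  \det M = m 0%N 0%N * (m 1%N 1%N * m 2%N 2%N - m 1%N 2%N * m 2%N 1%N)
         - m 0%N 1%N * (m 1%N 0%N * m 2%N 2%N - m 1%N 2%N * m 2%N 0%N)
         + m 0%N 2%N * (m 1%N 0%N * m 2%N 1%N - m 1%N 1%N * m 2%N 0%N).
Proof.
move=> m; have mE (i j : 'I_3) : M i j = m i j by rewrite /m !inord_val.
rewrite (expand_det_row _ ord0) !big_ord_recl big_ord0 /cofactor.
rewrite !(expand_det_row _ ord0) !big_ord_recl !big_ord0 /cofactor !det_mx11 !mxE /=.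
by rewrite !mE /m /bump /= !expr0 !expr1; ring.
Qed.

Lemma ord3_cases (i : 'I_3) : [\/ i = inord 0, i = inord 1 | i = inord 2].
Proof.
by case: i => [[|[|[|//]]] hi]; [apply: Or31 | apply: Or32 | apply: Or33];
  apply: val_inj; rewrite /= inordK.
Qed.

Lemma inord3E (i j : nat) : (i < 3)%N -> (j < 3)%N -> ((inord i : 'I_3) == inord j) = (i == j).
Proof. by move=> lt_i3 lt_j3; rewrite -(inj_eq val_inj) /= !inordK. Qed.

Section DeriveRules.
Variable R : realType.
Implicit Types (f g : R -> R) (x df dg k : R).

(* The library rules are stated for [f + g], [f * g], [cst k], [id]; unifying
   those with explicit lambda terms is very slow, so [derive_chain] uses these. *)
Lemma is_derive_add f g x df dg : is_derive x 1 f df -> is_derive x 1 g dg ->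
  is_derive x 1 (fun h => f h + g h) (df + dg).
Proof. exact: is_deriveD. Qed.

Lemma is_derive_opp f x df : is_derive x 1 f df -> is_derive x 1 (fun h => - f h) (- df).
Proof. exact: is_deriveN. Qed.

Lemma is_derive_mul f g x df dg : is_derive x 1 f df -> is_derive x 1 g dg ->
  is_derive x 1 (fun h => f h * g h) (f x * dg + g x * df).
Proof. exact: is_deriveM. Qed.

Lemma is_derive_inv f x df : f x != 0 -> is_derive x 1 f df ->
  is_derive x 1 (fun h => (f h)^-1) (- (f x) ^- 2 * df).
Proof. exact: is_deriveV. Qed.

Lemma is_derive_const x k : is_derive x 1 (fun _ => k) 0.
Proof. exact: is_derive_cst. Qed.

Lemma is_derive_var x : is_derive x 1 (fun h => h) 1.
Proof. exact: is_derive_id. Qed.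

Lemma derive1_is_derive f x df df' : is_derive x 1 f df -> df = df' -> derive1 f x = df'.
Proof. by move=> fdf <-; rewrite derive1E derive_val. Qed.

End DeriveRules.

Ltac derive_chain := repeat first
  [ apply: is_derive_const | apply: is_derive_var | apply: is_derive_add
  | apply: is_derive_opp | apply: is_derive_mul | apply: is_derive_inv ].

Section Jacobian.
Variables (R : realType) (s d a Tmax b alpha mu p c : R).
Local Notation T0 := (T0 s d a Tmax).
Local Notation E1 := (E1 s d a Tmax).

Let unit_coord (j : 'I_3) (k : nat) : R := (k == j)%:R.

Lemma mkst0E (T I V : R) : mkst T I V (inord 0) 0 = T.
Proof. by rewrite mxE (@inordK 2 0). Qed.
Lemma mkst1E (T I V : R) : mkst T I V (inord 1) 0 = I.
Proof. by rewrite mxE (@inordK 2 1). Qed.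
Lemma mkst2E (T I V : R) : mkst T I V (inord 2) 0 = V.
Proof. by rewrite mxE (@inordK 2 2). Qed.

Lemma cT_E1_shift j h : cT (E1 + h *: delta_mx j 0) = T0 + h * unit_coord j 0.
Proof.
by rewrite /unit_coord /cT /E1 /mkst !mxE -!(inj_eq val_inj) /= !inordK // andbT /= ?add0r.
Qed.
Lemma cI_E1_shift j h : cI (E1 + h *: delta_mx j 0) = h * unit_coord j 1.
Proof.
by rewrite /unit_coord /cI /E1 /mkst !mxE -!(inj_eq val_inj) /= !inordK // andbT /= ?add0r.
Qed.
Lemma cV_E1_shift j h : cV (E1 + h *: delta_mx j 0) = h * unit_coord j 2.
Proof.
by rewrite /unit_coord /cV /E1 /mkst !mxE -!(inj_eq val_inj) /= !inordK // andbT /= ?add0r.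
Qed.

Let scaleRE (x y : R) : x *: y = x * y. Proof. by []. Qed.

(* The rate expressions are retyped here rather than taken from Defs: running
   [derive_chain] on the Defs terms gets lost in structure unification. *)
Lemma derive1_T_rate (T u0 u1 u2 : R) :
  derive1 (fun h => s - d * (T + h * u0)
      + a * (T + h * u0) * (1 - ((T + h * u0) + h * u1) / Tmax)
      - b * (T + h * u0) * (h * u2) / (1 + alpha * (h * u2))) 0 =
  - d * u0 + a * u0 * (1 - T / Tmax) - a * T * (u0 + u1) / Tmax - b * T * u2.
Proof.
eapply derive1_is_derive; first by derive_chain; rewrite mul0r mulr0 addr0 oner_eq0.
by rewrite ?(mul0r, mulr0, add0r, addr0, mul1r, mulr1) ?scaleRE invr1; ring.
Qed.

Lemma derive1_I_rate (K T u0 u1 : R) :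
  derive1 (fun h => K + a * (h * u1) * (1 - ((T + h * u0) + h * u1) / Tmax) - mu * (h * u1)) 0 =
  a * u1 * (1 - T / Tmax) - mu * u1.
Proof.
eapply derive1_is_derive; first by derive_chain.
by rewrite ?(mul0r, mulr0, add0r, addr0, mul1r, mulr1) ?scaleRE; ring.
Qed.

Lemma derive1_I_delayed_rate (K1 K2 T u0 u2 : R) :
  derive1 (fun h => b * (T + h * u0) * (h * u2) / (1 + alpha * (h * u2)) + K1 - K2) 0 =
  b * T * u2.
Proof.
eapply derive1_is_derive; first by derive_chain; rewrite mul0r mulr0 addr0 oner_eq0.
by rewrite ?(mul0r, mulr0, add0r, addr0, mul1r, mulr1) ?scaleRE invr1; ring.
Qed.

Lemma derive1_V_rate (u1 u2 : R) :
  derive1 (fun h => p * (h * u1) - c * (h * u2)) 0 = p * u1 - c * u2.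
Proof.
eapply derive1_is_derive; first by derive_chain.
by rewrite ?(mul0r, mulr0, add0r, addr0, mul1r, mulr1) ?scaleRE; ring.
Qed.

Definition jac_TT : R := - d + a * (1 - T0 / Tmax) - a * T0 / Tmax.
Definition jac_II : R := a * (1 - T0 / Tmax) - mu.

Local Notation jac0 := (jac0 s d a Tmax b alpha mu p c).
Local Notation jac1 := (jac1 s d a Tmax b alpha mu p c).

Lemma jac0_row0 j : jac0 (inord 0) j =
  - d * unit_coord j 0 + a * unit_coord j 0 * (1 - T0 / Tmax)
  - a * T0 * (unit_coord j 0 + unit_coord j 1) / Tmax - b * T0 * unit_coord j 2.
Proof.
rewrite mxE -derive1_T_rate; congr derive1; apply/funext => h.
by rewrite mkst0E /rhsT cT_E1_shift cI_E1_shift cV_E1_shift.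
Qed.

Lemma jac0_row1 j : jac0 (inord 1) j = a * unit_coord j 1 * (1 - T0 / Tmax) - mu * unit_coord j 1.
Proof.
rewrite mxE -(derive1_I_rate (b * cT E1 * cV E1 / (1 + alpha * cV E1)) _ (unit_coord j 0)).
by congr derive1; apply/funext => h; rewrite mkst1E /rhsI cT_E1_shift cI_E1_shift.
Qed.

Lemma jac0_row2 j : jac0 (inord 2) j = p * unit_coord j 1 - c * unit_coord j 2.
Proof.
rewrite mxE -derive1_V_rate; congr derive1; apply/funext => h.
by rewrite mkst2E /rhsV cI_E1_shift cV_E1_shift.
Qed.

Lemma jac1_row0 j : jac1 (inord 0) j = 0.
Proof.
by rewrite mxE; under eq_fun => h do rewrite mkst0E /rhsT; exact: derive1_cst.
Qed.

Lemma jac1_row1 j : jac1 (inord 1) j = b * T0 * unit_coord j 2.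
Proof.
rewrite mxE -(derive1_I_delayed_rate (a * cI E1 * (1 - (cT E1 + cI E1) / Tmax)) (mu * cI E1)
  _ (unit_coord j 0)).
by congr derive1; apply/funext => h; rewrite mkst1E /rhsI cT_E1_shift cV_E1_shift.
Qed.

Lemma jac1_row2 j : jac1 (inord 2) j = 0.
Proof.
by rewrite mxE; under eq_fun => h do rewrite mkst2E /rhsV; exact: derive1_cst.
Qed.

Lemma jac0E : jac0 = \matrix_(i < 3, j < 3)
  (nth [::] [:: [:: jac_TT; - (a * T0 / Tmax); - (b * T0)];
                [:: 0;      jac_II;             0];
                [:: 0;      p;                  - c]] i)`_j.
Proof.
apply/matrixP => i j; rewrite [RHS]mxE.
case: (ord3_cases i) => ->;
  rewrite ?(jac0_row0, jac0_row1, jac0_row2) /jac_TT /jac_II inordK //=;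
  case: (ord3_cases j) => ->; rewrite /unit_coord inordK //=; ring.
Qed.

Lemma jac1E : jac1 = \matrix_(i < 3, j < 3)
  (nth [::] [:: [:: 0; 0; 0];
                [:: 0; 0; b * T0];
                [:: 0; 0; 0]] i)`_j.
Proof.
apply/matrixP => i j; rewrite [RHS]mxE.
case: (ord3_cases i) => ->;
  rewrite ?(jac1_row0, jac1_row1, jac1_row2) inordK //=;
  case: (ord3_cases j) => ->; rewrite /unit_coord inordK //=; ring.
Qed.

End Jacobian.

Section Characteristic.
Variables (R : realType) (s d a Tmax b alpha mu p c : R).
Local Notation T0 := (T0 s d a Tmax).

Local Open Scope complex_scope.

Lemma delay_charmx_entry n (lam z : R[i]) (A B : 'M[R]_n) i j :
  (lam%:M - map_mx (fun r : R => r%:C) A - z *: map_mx (fun r : R => r%:C) B) i j =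
  lam *+ (i == j) - (A i j)%:C - z * (B i j)%:C.
Proof. by rewrite !mxE. Qed.

Lemma charfunE tau (lam : R[i]) : charfun s d a Tmax b alpha mu p c tau lam =
  (lam - (jac_TT s d a Tmax)%:C) *
  ((lam - (jac_II s d a Tmax mu)%:C) * (lam + c%:C) - cexp (- (lam * tau%:C)) * (b * p * T0)%:C).
Proof.
rewrite /charfun jac0E jac1E det_mx33 !delay_charmx_entry !mxE !inord3E // !inordK //=.
move: T0 (cexp _) => T z.
by rewrite ?(mulr0, mulr1n, mulr0n, rmorph0, subr0, sub0r, rmorphN, rmorphM); ring.
Qed.
End Characteristic.

Section Quasipolynomial.
Variables (R : realType) (k c B tau : R).

Lemma quasipoly_pos_root : 0 < c -> 0 < B -> 0 <= tau -> 0 < B / c + k ->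
  exists2 x : R, 0 < x & (x - k) * (x + c) = expR (- (x * tau)) * B.
Proof.
move=> c_gt0 B_gt0 tau_ge0 hk; pose g x := (x - k) * (x + c) - expR (- (x * tau)) * B.
have Bq : B = B / c * c by rewrite mulfVK ?gt_eqF.
have q_gt0 : 0 < B / c by rewrite divr_gt0.
move: (B / c) Bq q_gt0 hk => q Bq q_gt0 hk.
have g0_lt0 : g 0 < 0.
  rewrite /g mul0r oppr0 expR0 mul1r sub0r add0r.
  have : 0 < B + k * c by rewrite Bq -mulrDl mulr_gt0.
  lra.
pose L := `|k| + q + 1.
have k_le : k <= `|k| := ler_norm k.
have L_ge0 : 0 <= L by rewrite /L; have := normr_ge0 k; lra.
have gL_gt0 : 0 < g L.
  have E_le1 : expR (- (L * tau)) <= 1 by rewrite expR_le1 oppr_le0 mulr_ge0.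
  have E_gt0 : 0 < expR (- (L * tau)) := expR_gt0 _.
  have : (q + 1) * c <= (L - k) * (L + c).
    by apply: ler_pM; rewrite /L; lra.
  rewrite /g; nra.
have g_cont : forall x, {for x, continuous g}.
  move=> x; rewrite /g.
  repeat first [apply: continuousD | apply: continuousN | apply: continuousM
               | apply: cvg_cst | apply: cvg_id | apply: continuous_comp
               | apply: continuous_expR].
have [x x_in gx0] : exists2 x, x \in `[0, L] & g x = 0.
  apply: IVT => //; first exact: continuous_subspaceT.
  by rewrite minr_absE maxr_absE ltr0_norm ?subr_lt0; [apply/andP; split; lra | lra].
exists x; last exact: subr0_eq gx0.
rewrite lt_neqAle eq_sym; move: x_in; rewrite in_itv /= => /andP[-> _]; rewrite andbT.
by apply: contraTneq g0_lt0 => x0; rewrite -{1}x0 gx0 ltxx.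
Qed.

Local Open Scope complex_scope.

Lemma quasipoly_root_Re_lt0 (lam : R[i]) :
  0 < c -> 0 < B -> 0 <= tau -> B / c + k < 0 ->
  (lam - k%:C) * (lam + c%:C) = cexp (- (lam * tau%:C)) * B%:C -> complex.Re lam < 0.
Proof.
move=> c_gt0 B_gt0 tau_ge0 hk; case: lam => x y.
rewrite /cexp /= !(mulr0, mul0r, subr0, addr0, add0r) => /eqP.
rewrite eq_complex /= !(mulr0, mul0r, subr0, addr0, add0r) => /andP[/eqP re_eq /eqP im_eq].
rewrite ltNge; apply/negP => x_ge0.
set E := expR _ in re_eq im_eq; set th := - (y * tau) in re_eq im_eq.
have E_le1 : E <= 1 by rewrite expR_le1 oppr_le0 mulr_ge0.
have E_gt0 : 0 < E := expR_gt0 _.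
have modulus : ((x - k) ^+ 2 + y ^+ 2) * ((x + c) ^+ 2 + y ^+ 2) = (E * B) ^+ 2.
  transitivity (((x - k) * (x + c) - y * y) ^+ 2 + ((x - k) * y + y * (x + c)) ^+ 2).
    by ring.
  by rewrite re_eq im_eq -[RHS]mulr1 -(cos2Dsin2 th); ring.
have Bq : B = B / c * c by rewrite mulfVK ?gt_eqF.
have q_gt0 : 0 < B / c by rewrite divr_gt0.
move: (B / c) Bq q_gt0 hk => q Bq q_gt0 hk.
have B_lt : B < (x - k) * (x + c).
  have : q < x - k by lra.
  rewrite Bq; nra.
have : B ^+ 2 < ((x - k) ^+ 2 + y ^+ 2) * ((x + c) ^+ 2 + y ^+ 2).
  have : 0 <= y ^+ 2 * ((x - k) ^+ 2 + (x + c) ^+ 2 + y ^+ 2).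
    by rewrite mulr_ge0 ?addr_ge0 ?sqr_ge0.
  nra.
have EB_le : E * B <= B by nra.
have EB_gt0 : 0 < E * B by rewrite mulr_gt0.
rewrite modulus; nra.
Qed.

End Quasipolynomial.

Section InfectionFree.
Variables (R : realType) (s d a Tmax b mu p c : R).
Local Notation T0 := (T0 s d a Tmax).
Local Notation S := (Num.sqrt ((a - d) ^+ 2 + 4 * a * s / Tmax)).

Lemma sqrt_disc_gt_norm : 0 < a -> 0 < s -> 0 < Tmax -> `|a - d| < S.
Proof.
move=> a_gt0 s_gt0 Tmax_gt0; have h : 0 < 4 * a * s / Tmax by rewrite !mulr_gt0 ?invr_gt0.
by rewrite -sqrtr_sqr ltr_sqrt ?ltrDl //; apply: (lt_le_trans h); rewrite lerDr sqr_ge0.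
Qed.

Lemma T0_gt0 : 0 < a -> 0 < s -> 0 < Tmax -> 0 < T0.
Proof.
move=> a_gt0 s_gt0 Tmax_gt0; have := sqrt_disc_gt_norm a_gt0 s_gt0 Tmax_gt0.
have := ler_norm (d - a); rewrite distrC => da_le ad_lt.
by rewrite /Defs.T0 mulr_gt0 ?divr_gt0 ?mulr_gt0 //; lra.
Qed.

Lemma jac_TTE : 0 < a -> 0 < Tmax -> jac_TT s d a Tmax = - S.
Proof. by move=> a_gt0 Tmax_gt0; rewrite /jac_TT /Defs.T0; field; rewrite !gt_eqF. Qed.

Lemma R0_sub1E : 0 < mu ->
  R0 s d a Tmax b mu p c - 1 = mu^-1 * (b * p * T0 / c + jac_II s d a Tmax mu).
Proof.
by move=> mu_gt0; rewrite /R0 /jac_II -[X in _ - X](mulVf (lt0r_neq0 mu_gt0)); ring.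
Qed.

End InfectionFree.

Local Open Scope complex_scope.

Lemma cexp_real (R : realType) (r : R) : cexp r%:C = (expR r)%:C.
Proof. by rewrite /cexp /= cos0 sin0 mulr1 mulr0. Qed.

Theorem mainTheorem3 (R : realType) (s d a Tmax b alpha mu p c tau : R)
  (hs : 0 < s) (hd : 0 < d) (ha : 0 < a) (hTmax : 0 < Tmax) (hb : 0 < b)
  (halpha : 0 < alpha) (hmu : 0 < mu) (hp : 0 < p) (hc : 0 < c) (htau : 0 <= tau) :
  (1 < R0 s d a Tmax b mu p c ->
     exists lam : R, 0 < lam /\ charfun s d a Tmax b alpha mu p c tau lam%:C = 0) /\
  (R0 s d a Tmax b mu p c < 1 ->
     forall lam : R[i], charfun s d a Tmax b alpha mu p c tau lam = 0 -> complex.Re lam < 0).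
Proof.
have B_gt0 : 0 < b * p * T0 s d a Tmax.
  by apply: mulr_gt0; [exact: mulr_gt0 | exact: T0_gt0].
have mu_inv_gt0 : 0 < mu^-1 by rewrite invr_gt0.
split.
  rewrite -subr_gt0 R0_sub1E // pmulr_rgt0 // => K_gt0.
  have [x x_gt0 gx] := quasipoly_pos_root hc B_gt0 htau K_gt0.
  exists x; split => //; rewrite charfunE.
  have -> : cexp (- (x%:C * tau%:C)) = (expR (- (x * tau)))%:C.
    by rewrite -cexp_real rmorphN rmorphM.
  have /= := congr1 (fun r : R => r%:C) gx; rewrite !(rmorphM, rmorphB, rmorphD) => ->.
  by rewrite subrr mulr0.
rewrite -subr_lt0 R0_sub1E // pmulr_rlt0 // => K_lt0 lam.
rewrite charfunE => /eqP; rewrite mulf_eq0 => /orP[/eqP/subr0_eq -> | /eqP/subr0_eq].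
  rewrite jac_TTE //= oppr_lt0.
  exact: le_lt_trans (normr_ge0 _) (sqrt_disc_gt_norm _ ha hs hTmax).
exact: quasipoly_root_Re_lt0.
Qed.
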